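(* Let $p$ be a prime and let $G$ be a finite subgroup of $\mathrm{M}(p,\mathbb{C})$ whose permutation part $\phi(G)$ is transitive. If $\mathrm{D}(p,\mathbb{C})\cap G$ is not contained in the group of scalar matrices, then $G$ is irreducible. Conversely, if $G$ is solvable and irreducible, then $\mathrm{D}(p,\mathbb{C})\cap G$ is not contained in the group of scalar matrices.
   Context: $\mathrm{M}(p,\mathbb{C})$ is the group of monomial matrices in $\mathrm{GL}(p,\mathbb{C})$, equal to $\mathrm{D}(p,\mathbb{C})\rtimes \mathrm{P}(p)$ with $\mathrm{D}(p,\mathbb{C})$ the invertible diagonal matrices and $\mathrm{P}(p)\cong\mathrm{Sym}(p)$ the permutation matrices (via $\alpha\mapsto[\delta_{i\alpha,j}]_{i,j}$). The map $\phi\colon \mathrm{M}(p,\mathbb{C})\to\mathrm{Sym}(p)$ sends $dt\mapsto t$; $\phi(G)$ is the permutation part of $G$. *)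

From HB Require Import structures.
From mathcomp Require Import all_boot all_order all_algebra all_fingroup all_solvable.
From mathcomp Require Import mxrepresentation.
From mathcomp Require Import complex.
From mathcomp Require Import Rstruct.
Set Implicit Arguments. Unset Strict Implicit. Unset Printing Implicit Defensive.
Import GRing.Theory Num.Theory.
Local Open Scope ring_scope.

(* The field of complex numbers: C = R[i] with R the (Stdlib) real numbers,
   which is a real closed field (realType), so complex R is algebraically closed. *)
Definition Cfield : numClosedFieldType := complex Rdefinitions.R.

(* M is the monomial matrix d t with d = diag_mx dv invertible diagonal and
   t = perm_mx s the permutation matrix [delta_{i s, j}]_{i,j}.
   Its permutation part phi(M) is s. *)
Definition monomial_decomp (F : fieldType) (n : nat) (M : 'M[F]_n)
    (dv : 'rV[F]_n) (s : 'S_n) : Prop :=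
  (forall i, dv 0 i != 0) /\ M = diag_mx dv *m perm_mx s.

Definition is_monomial (F : fieldType) (n : nat) (M : 'M[F]_n) : Prop :=
  exists dv s, monomial_decomp M dv s.

Definition perm_part_transitive (F : fieldType) (gT : finGroupType)
    (G : {group gT}) (n : nat) (rG : mx_representation F G n) : Prop :=
  forall i j : 'I_n, exists x, x \in G /\
    exists dv s, monomial_decomp (rG x) dv s /\ s i = j.

Definition diag_part_nonscalar (F : fieldType) (gT : finGroupType)
    (G : {group gT}) (n : nat) (rG : mx_representation F G n) : Prop :=
  exists x, x \in G /\ is_diag_mx (rG x) /\ ~ is_scalar_mx (rG x).

From HB Require Import structures.
From mathcomp Require Import all_boot all_order all_algebra all_fingroup all_solvable.
From mathcomp Require Import mxrepresentation.
Set Implicit Arguments. Unset Strict Implicit. Unset Printing Implicit Defensive.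
Import GRing.Theory.

(* A transitive permutation group of prime degree p preserves no nontrivial
   partition of {0, ..., p-1}: all blocks have the same size, which divides p.

   Let D = D(p,C) cap G and phi be the permutation part. D is normal in G, and
   conjugating by g in G permutes the p coordinate characters of D along phi(g).
   These characters are therefore either all equal, i.e. D is scalar, or
   pairwise distinct. In the latter case, subtracting suitable multiples of
   the images of a nonzero vector under diagonal elements shrinks its support
   until a coordinate vector e_i lies in any nonzero submodule; transitivity
   then moves e_i to every e_j, so G is irreducible.

   Conversely, suppose G is solvable and irreducible and D is scalar, hence
   central (rG is faithful). A minimal normal subgroup M of the solvable
   transitive group phi(G) is abelian and transitive, hence regular of order p,
   and p does not divide |phi(G) : M| because p^2 does not divide p!. Its
   preimage N is central-by-cyclic, hence abelian. By Clifford's theorem the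
   restriction to N has 1 or p homogeneous components. With one, N acts by
   scalars and phi(N) = M is trivial; with p, their stabiliser has index p
   and contains N, so p divides |G : N| = |phi(G) : M|. *)

Lemma prime_trans_inj_or_const (p : nat) (Q : {set {perm 'I_p}}) (rT : eqType)
    (f : 'I_p -> rT) :
  prime p -> (forall i j, exists2 s, s \in Q & s i = j) ->
  {in Q, forall (s : {perm 'I_p}) i j, f i = f j -> f (s i) = f (s j)} ->
  injective f \/ (forall i j, f i = f j).
Proof.
move=> p_pr transQ fibresQ; pose C i := [set j | f j == f i].
have leC i j : #|C i| <= #|C j|.
  have [s Qs <-] := transQ i j; rewrite -(card_imset _ (@perm_inj _ s)).
  apply/subset_leq_card/subsetP=> _ /imsetP[k /[!inE] /eqP fk ->].
  by rewrite (fibresQ s Qs _ _ fk).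
have eqC i j : #|C i| = #|C j| by apply/eqP; rewrite eqn_leq !leC.
pose i0 : 'I_p := Ordinal (prime_gt0 p_pr).
have dvdC : #|C i0| %| p.
  rewrite -[p in _ %| p]card_ord -cardsT (card_partition (preim_partitionP f setT)).
  apply: dvdn_sum => _ /imsetP[i _ ->]; rewrite (eqC i0 i).
  by rewrite (eq_card (B := [set y in setT | f i == f y])) // => j; rewrite !inE eq_sym.
have C_id i : i \in C i by rewrite inE.
have [_ /(_ _ dvdC)/orP[] /eqP cardC] := primeP p_pr.
  left=> i j fij; have /cards1P[k Ck] : #|C i| == 1 by rewrite (eqC i i0) cardC.
  have := C_id i; have : j \in C i by rewrite inE fij.
  by rewrite Ck !inE => /eqP-> /eqP->.
right=> i j; have CT : C i0 = setT.
  by apply/eqP; rewrite eqEcard subsetT cardsT card_ord cardC /=.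
by have := in_setT i; have := in_setT j; rewrite -CT !inE => /eqP-> /eqP->.
Qed.

Section PrimeDegree.
Local Open Scope group_scope.

Lemma abelian_trans_card (T : finType) (A : {group {perm T}}) x :
  abelian A -> orbit 'P A x = setT -> #|A| = #|T|.
Proof.
move=> cAA orbT; rewrite -cardsT -orbT card_orbit.
suff -> : 'C_A[x | 'P] = 1%g by rewrite indexg1.
apply/trivgP/subsetP=> a /setIP[Aa /astab1P/=]; rewrite apermE => ax.
rewrite inE; apply/eqP/permP=> y; rewrite perm1.
have /orbitP[b Ab <-] : y \in orbit 'P A x by rewrite orbT inE.
by rewrite /= !apermE -permM -(centsP cAA a Aa b Ab) permM ax.
Qed.

Lemma solvable_prime_trans_normal (p : nat) (Q : {group {perm 'I_p}}) :
  prime p -> solvable Q -> (forall i j, exists2 s, s \in Q & s i = j) ->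
  exists2 M : {group {perm 'I_p}}, M <| Q & #|M| = p.
Proof.
move=> p_pr solQ transQ; pose i0 : 'I_p := Ordinal (prime_gt0 p_pr).
have ntQ : Q :!=: 1%g.
  have [s Qs si0] := transQ i0 (Ordinal (prime_gt1 p_pr)).
  apply/trivgPn; exists s => //; apply/eqP=> s1.
  by move/(congr1 val): si0; rewrite s1 perm1.
have [M minM sMQ] := minnormal_exists ntQ (normG Q).
have [nMQ ntM /is_abelemP[q _ /abelem_abelian cMM]] := minnormal_solvable minM sMQ solQ.
have nsMQ : M <| Q by rewrite /normal sMQ.
exists M => //; rewrite -[RHS]card_ord (abelian_trans_card cMM (x := i0)) //.
have [orb_inj | orb_const] :
    injective (orbit 'P M) \/ forall i j, orbit 'P M i = orbit 'P M j.
- apply: (prime_trans_inj_or_const p_pr transQ) => s Qs i j orb_ij.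
  have orbitJ k : orbit 'P M (s k) = setact 'P (orbit 'P M k) s.
    by rewrite setact_orbit (normP (subsetP nMQ s Qs)).
  by rewrite !orbitJ orb_ij.
- case/trivgPn: ntM => a Ma; apply: contraNeq => _; apply/eqP/permP => i.
  by rewrite perm1; apply: orb_inj; rewrite -[a i]apermE orbit_act.
by apply/setP=> i; rewrite inE (orb_const i0 i) orbit_refl.
Qed.

Lemma prime_sq_ndvd_fact p : prime p -> ~~ (p * p %| p`!).
Proof.
move=> p_pr; have p_gt1 := prime_gt1 p_pr.
have p_gt0 := prime_gt0 p_pr.
rewrite -{3}(prednK p_gt0) factS prednK // dvdn_pmul2l //.
apply/negP=> dvd_p_fact; have := Wilson p_gt1; rewrite p_pr => /esym.
by rewrite -addn1 dvdn_addr // dvdn1 => /eqP p1; rewrite p1 in p_gt1.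
Qed.

Lemma perm_prime_index_ndvd (p : nat) (Q M : {group {perm 'I_p}}) :
  prime p -> M \subset Q -> #|M| = p -> ~~ (p %| #|Q : M|).
Proof.
move=> p_pr sMQ oM; apply: contra (prime_sq_ndvd_fact p_pr) => dvd_p_iQM.
apply: dvdn_trans (_ : #|Q| %| p`!); last first.
  by rewrite -card_Sn -cardsT cardSg ?subsetT.
by rewrite -(Lagrange sMQ) oM dvdn_pmul2l ?prime_gt0.
Qed.

End PrimeDegree.

Local Open Scope ring_scope.

Section DiagonalProducts.
Variables (R : pzRingType) (m n : nat).

Lemma diag_mulmxE (D : 'M[R]_m) (A : 'M[R]_(m, n)) i j :
  is_diag_mx D -> (D *m A) i j = D i i * A i j.
Proof.
move=> /is_diag_mxP dD; rewrite mxE (bigD1 i) //= big1 ?addr0 // => k ki.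
by rewrite dD ?mul0r // eq_sym.
Qed.

Lemma mulmx_diagE (A : 'M[R]_(m, n)) (D : 'M[R]_n) i j :
  is_diag_mx D -> (A *m D) i j = A i j * D j j.
Proof.
move=> /is_diag_mxP dD; rewrite mxE (bigD1 j) //= big1 ?addr0 // => k kj.
by rewrite dD ?mulr0.
Qed.

End DiagonalProducts.

Section MonomialMatrices.
Variables (F : fieldType) (n : nat).
Implicit Types (M N : 'M[F]_n) (s : 'S_n).

Definition mx_perm_support M s := [forall i, forall j, (M i j != 0) == (s i == j)].

(* The permutation part phi(M) of a monomial matrix M; junk (1) otherwise. *)
Definition mx_perm M : 'S_n := odflt 1%g [pick s | mx_perm_support M s].

Lemma mx_perm_supportP M s i j : mx_perm_support M s -> (M i j != 0) = (s i == j).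
Proof. by move=> /forallP/(_ i)/forallP/(_ j)/eqP. Qed.

Lemma mx_perm_supportE M s : mx_perm_support M s -> mx_perm M = s.
Proof.
rewrite /mx_perm; case: pickP => [t suppt | /(_ s)->] // supps; apply/permP => i.
by apply/eqP; rewrite -(mx_perm_supportP i _ suppt) (mx_perm_supportP _ _ supps).
Qed.

Lemma monomial_decomp_support M dv s : monomial_decomp M dv s -> mx_perm_support M s.
Proof.
case=> nz_dv ->; apply/forallP=> i; apply/forallP=> j.
rewrite mul_diag_mx perm_mxEsub !mxE.
by case: (s i == j); rewrite ?mulr1 ?mulr0 ?nz_dv ?eqxx.
Qed.

Lemma monomial_decomp_perm M dv s : monomial_decomp M dv s -> mx_perm M = s.
Proof. by move/monomial_decomp_support/mx_perm_supportE. Qed.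

Section OneMonomial.
Variable M : 'M[F]_n.
Hypothesis monoM : is_monomial M.

Lemma monomial_support : mx_perm_support M (mx_perm M).
Proof.
have [dv [s decM]] := monoM.
by rewrite (monomial_decomp_perm decM); apply: monomial_decomp_support decM.
Qed.

Lemma monomial_perm_neq0 i : M i (mx_perm M i) != 0.
Proof. by rewrite (mx_perm_supportP _ _ monomial_support). Qed.

Lemma monomial_row i : row i M = M i (mx_perm M i) *: delta_mx 0 (mx_perm M i).
Proof.
apply/rowP=> j; rewrite !mxE eqxx /=; have [<- | ne] := eqVneq (mx_perm M i) j.
  by rewrite mulr1.
by apply/eqP; rewrite mulr0 -[_ == 0]negbK (mx_perm_supportP _ _ monomial_support) ne.
Qed.

Lemma monomial_mulmxE m (A : 'M[F]_(n, m)) i j :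
  (M *m A) i j = M i (mx_perm M i) * A (mx_perm M i) j.
Proof.
have -> : (M *m A) i j = row i (M *m A) 0 j by rewrite [RHS]mxE.
by rewrite row_mul monomial_row -scalemxAl -rowE !mxE.
Qed.

Lemma monomial_diag : is_diag_mx M = (mx_perm M == 1%g).
Proof.
apply/is_diag_mxP/eqP => [diagM | perm1M i j ne]; last first.
  apply/eqP; rewrite -[_ == 0]negbK (mx_perm_supportP _ _ monomial_support).
  by rewrite perm1M perm1 ne.
apply/permP=> i; apply/eqP; rewrite perm1; apply: contraT => ne.
by have := monomial_perm_neq0 i; rewrite diagM ?eqxx // eq_sym.
Qed.

End OneMonomial.

Lemma mx_permM M N : is_monomial M -> is_monomial N ->
  mx_perm (M *m N) = (mx_perm M * mx_perm N)%g.
Proof.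
move=> monoM monoN; apply: mx_perm_supportE; apply/forallP=> i; apply/forallP=> j.
rewrite monomial_mulmxE // mulf_eq0 negb_or monomial_perm_neq0 //= permM.
by rewrite (mx_perm_supportP _ _ (monomial_support monoN)).
Qed.

Lemma monomial_conj_diag M D D' i : is_monomial M -> is_diag_mx D -> is_diag_mx D' ->
  M *m D = D' *m M -> D' i i = D (mx_perm M i) (mx_perm M i).
Proof.
move=> monoM diagD diagD' /(congr1 (fun A : 'M_n => A i (mx_perm M i))).
rewrite monomial_mulmxE // diag_mulmxE // mulrC => /esym.
exact/mulIf/monomial_perm_neq0.
Qed.

End MonomialMatrices.

Section SeparatingDiagonal.
Variables (F : fieldType) (n : nat) (I : Type) (D : I -> 'M[F]_n).
Hypothesis diagD : forall k, is_diag_mx (D k).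
Hypothesis sepD : forall i j, i != j -> exists k, D k i i != D k j j.

Lemma separating_diag_stable_delta m (U : 'M[F]_(m, n)) :
    (forall k, (U *m D k <= U)%MS) -> U != 0 ->
  exists i, ((delta_mx 0 i : 'rV[F]_n) <= U)%MS.
Proof.
move=> stabU nzU; pose supp (v : 'rV[F]_n) := [set k | v 0 k != 0].
suff: forall r v, (#|supp v| < r)%N -> v != 0 -> (v <= U)%MS ->
    exists i, ((delta_mx 0 i : 'rV[F]_n) <= U)%MS.
  move/(_ n.+1 (nz_row U)); apply; rewrite ?nz_row_eq0 ?nz_row_sub //.
  by rewrite ltnS -[n in (_ <= n)%N]card_ord max_card.
elim=> // r IHr v supp_v nz_v sub_vU.
have [i vi] : exists i, v 0 i != 0.
  apply/existsP; apply: contraR nz_v => /existsPn v0.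
  by apply/eqP/rowP=> k; rewrite mxE; apply/eqP/negPn/v0.
have [j /andP[ji vj] | v_i] := pickP [pred j | (j != i) && (v 0 j != 0)].
  have [k Dk] := sepD ji; pose w := v *m D k - D k i i *: v.
  have wE l : w 0 l = v 0 l * (D k l l - D k i i).
    by rewrite mxE mulmx_diagE // !mxE mulrBr [D k i i * _]mulrC.
  apply: (IHr w).
  - rewrite ltnS in supp_v; apply: leq_trans supp_v.
    rewrite (cardsD1 i (supp v)) inE vi add1n ltnS.
    apply/subset_leq_card/subsetP=> l; rewrite !inE wE mulf_eq0 negb_or.
    by case/andP=> -> Dl; rewrite andbT; apply: contraNneq Dl => ->; rewrite subrr.
  - apply/negP=> /eqP/rowP/(_ j)/eqP.
    by rewrite wE mxE mulf_eq0 subr_eq0 (negbTE vj) (negbTE Dk).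
  - rewrite addmx_sub ?eqmx_opp ?scalemx_sub //.
    exact: submx_trans (submxMr _ sub_vU) (stabU k).
exists i; have -> : delta_mx 0 i = (v 0 i)^-1 *: v.
  apply/rowP=> l; rewrite !mxE eqxx /=; have [-> | li] := eqVneq l i.
    by rewrite mulVf.
  by have := v_i l; rewrite /= li => /negbFE/eqP->; rewrite mulr0.
exact: scalemx_sub.
Qed.

End SeparatingDiagonal.

Lemma faithful_rcenter_sub (F : fieldType) (gT : finGroupType) (G : {group gT}) n
    (rG : mx_representation F G n) :
  mx_faithful rG -> (rcenter rG \subset 'Z(G))%g.
Proof.
move=> ffulG; apply/subsetP=> x /setIdP[Gx /is_scalar_mxP[c rGx]].
rewrite inE Gx; apply/centP=> y Gy; apply: (mx_faithful_inj ffulG); rewrite ?groupM //.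
by rewrite !repr_mxM // rGx scalar_mxC.
Qed.

Lemma abelian_full_component_scalar (F : closedFieldType) (gT : finGroupType)
    (H : {group gT}) n (rH : mx_representation F H n) (sH : socleType rH) (W : sH) :
  abelian H -> \rank W = n -> {in H, forall h, is_scalar_mx (rH h)}.
Proof.
move=> cHH rankW h Hh; have simW := socle_simple W; have [modW _ _] := simW.
have rank1 := mxsimple_abelian_linear (@group_closure_closed_field F gT H) cHH simW.
have [u [a defu u_eigen]] := mxmodule_eigenvector modW rank1.
have W_ker : ((W : 'M_n) <= kermx (rH h - (a h)%:M))%MS.
  have [I [Ws isoW defW]] := component_mx_def simW.
  change (component_mx rH (socle_base W) <= kermx (rH h - (a h)%:M))%MS; rewrite defW.
  apply/sumsmx_subP=> i _; have [f _ homf <-] := isoW i.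
  rewrite (eqmxMr f defu) sub_kermx mulmxBr mul_mx_scalar.
  have /hom_mxP/(_ h Hh) <- : (u <= dom_hom_mx rH f)%MS by rewrite -defu.
  by rewrite u_eigen // -scalemxAl subrr.
apply/is_scalar_mxP; exists (a h); apply/eqP; rewrite -subr_eq0.
by rewrite -[_ - _]mul1mx -sub_kermx (submx_trans _ W_ker) // sub1mx /row_full rankW.
Qed.

Section PrimeDegreeClifford.
Local Open Scope group_scope.

Lemma mx_irr_prime_abelian_normal (F : closedFieldType) (gT : finGroupType)
    (G N : {group gT}) p (rG : mx_representation F G p) :
  prime p -> mx_irreducible rG -> N <| G -> abelian N ->
  {in N, forall x, is_scalar_mx (rG x)} \/ (p %| #|G : N|)%N.
Proof.
move=> p_pr irrG nsNG cNN; pose rN := subg_repr rG (normal_sub nsNG).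
suff: [forall x in N, is_scalar_mx (rG x)] || (p %| #|G : N|)%N.
  by case/orP=> [/forall_inP scalN | ]; [left | right].
apply: (socle_exists rN) => sH; have [W _ orbitW] := imsetP (Clifford_atrans irrG sH).
have rankW := Clifford_rank_components irrG W.
have /primeP[_ /(_ #|sH|)] := p_pr.
have -> : (#|sH| %| p)%N by rewrite -[p in (_ %| p)%N]rankW dvdn_mulr.
case/(_ isT)/orP=> /eqP card_sH.
  rewrite card_sH mul1n in rankW; apply/orP; left; apply/forall_inP=> x Nx.
  exact: (abelian_full_component_scalar cNN rankW).
apply/orP; right; rewrite -{1}card_sH -cardsT orbitW card_orbit_in ?subxx //.
apply: indexgS; rewrite subsetI normal_sub //=.
apply: subset_trans (joing_subl N 'C_G(N)) _; apply: subset_trans (Clifford_astab sH) _.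
exact: astabS (subsetT _).
Qed.

End PrimeDegreeClifford.

Section MonomialRepresentation.
Variables (F : fieldType) (n : nat) (gT : finGroupType) (G : {group gT}).
Variable rG : mx_representation F G n.
Hypothesis monoG : forall x, x \in G -> is_monomial (rG x).

Definition perm_part x := mx_perm (rG x).

Lemma perm_partM : {in G &, {morph perm_part : x y / (x * y)%g}}.
Proof.
by move=> x y Gx Gy; rewrite /perm_part repr_mxM // (mx_permM (monoG Gx) (monoG Gy)).
Qed.

Canonical perm_part_morphism := Morphism perm_partM.

Local Notation K := ('ker perm_part_morphism)%g.

Lemma mem_ker_perm_part x : (x \in K) = (x \in G) && is_diag_mx (rG x).
Proof. by rewrite !inE; apply: andb_id2l => Gx; rewrite (monomial_diag (monoG Gx)). Qed.

Lemma ker_perm_partJV x y : x \in K -> y \in G -> (x ^ y^-1)%g \in K.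
Proof. by move=> Kx Gy; rewrite memJ_norm ?(subsetP (ker_norm _)) ?groupV. Qed.

Lemma perm_part_transitiveP : perm_part_transitive rG ->
  forall i j, exists2 s, s \in (perm_part_morphism @* G)%g & s i = j.
Proof.
move=> transG i j; have [y [Gy [dv [s [decy sij]]]]] := transG i j.
by exists s; rewrite // -(monomial_decomp_perm decy); apply: mem_morphim.
Qed.

Lemma ker_perm_part_conj x y i : x \in K -> y \in G ->
  rG (x ^ y^-1)%g i i = rG x (perm_part y i) (perm_part y i).
Proof.
move=> Kx Gy; have /andP[Gx diagx] : (x \in G) && is_diag_mx (rG x).
  by rewrite -mem_ker_perm_part.
have /andP[_ diagxy] : (x ^ y^-1 \in G)%g && is_diag_mx (rG (x ^ y^-1)%g).
  by rewrite -mem_ker_perm_part ker_perm_partJV.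
apply: monomial_conj_diag (monoG Gy) diagx diagxy _.
by rewrite -!repr_mxM ?groupJ ?groupV // conjgE invgK mulgA mulgKV.
Qed.

Lemma ker_perm_part_scalar_or_separating : prime n -> perm_part_transitive rG ->
  {in K, forall x, is_scalar_mx (rG x)} \/
  (forall i j, i != j -> exists2 x, x \in K & rG x i i != rG x j j).
Proof.
move=> n_pr transG; pose f i := [ffun x => if x \in K then rG x i i else 0%R].
have fE i x : x \in K -> f i x = rG x i i by rewrite ffunE => ->.
have [f_inj | f_const] : injective f \/ forall i j, f i = f j.
  apply: (prime_trans_inj_or_const n_pr (perm_part_transitiveP transG)).
  move=> _ /morphimP[y Gy _ ->] i j fij; apply/ffunP=> x; rewrite !ffunE.
  case: ifP => // Kx.
  by rewrite -!ker_perm_part_conj // -!fE ?ker_perm_partJV // fij.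
- right=> i j ne; case: (pickP [pred x | f i x != f j x]) => [x | f_eq].
    by rewrite /= !ffunE; case: ifP => [Kx | _]; [exists x | rewrite eqxx].
  by case/eqP: ne; apply/f_inj/ffunP => x; apply/eqP/negbFE/f_eq.
left=> x Kx; have /andP[_ diagx] : (x \in G) && is_diag_mx (rG x).
  by rewrite -mem_ker_perm_part.
pose i0 := Ordinal (prime_gt0 n_pr); apply/is_scalar_mxP; exists (rG x i0 i0).
apply/matrixP=> i j; rewrite mxE; have [<- | ne] := eqVneq i j.
  by rewrite mulr1n -!fE // (f_const i i0).
by rewrite (is_diag_mxP diagx) // mulr0n.
Qed.

Lemma monomial_module_delta_full m (U : 'M[F]_(m, n)) i :
    perm_part_transitive rG -> mxmodule rG U ->
  ((delta_mx 0 i : 'rV[F]_n) <= U)%MS -> row_full U.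
Proof.
move=> transG modU deltaU; rewrite -sub1mx; apply/row_subP=> j; rewrite row1.
have [y [Gy [dv [s [decy sij]]]]] := transG i j.
have monoy := monoG Gy; have permy := monomial_decomp_perm decy.
have rowy : row i (rG y) = rG y i j *: delta_mx 0 j.
  by rewrite (monomial_row monoy) permy sij.
have nz_yij : rG y i j != 0%R by rewrite -sij -permy monomial_perm_neq0.
rewrite -[delta_mx 0 j](scalerK nz_yij) -rowy rowE scalemx_sub //.
exact: submx_trans (submxMr _ deltaU) (mxmoduleP modU y Gy).
Qed.

Lemma monomial_diag_nonscalar_irr : prime n -> perm_part_transitive rG ->
  diag_part_nonscalar rG -> mx_irreducible rG.
Proof.
move=> n_pr transG [a [Ga [diaga nscal_a]]].
have Ka : a \in K by rewrite mem_ker_perm_part Ga.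
have [scalK | sepK] := ker_perm_part_scalar_or_separating n_pr transG.
  by case: nscal_a; apply: scalK Ka.
apply/mx_irrP; split=> [|U modU nzU]; first exact: prime_gt0.
pose D (x : {x | x \in K}) := rG (val x).
have diagD x : is_diag_mx (D x).
  by have := valP x; rewrite mem_ker_perm_part => /andP[].
have sepD i j : i != j -> exists x, D x i i != D x j j.
  by case/sepK=> x Kx; exists (exist _ x Kx).
have stabD x : (U *m D x <= U)%MS by apply: (mxmoduleP modU); apply: dom_ker (valP x).
have [i deltaU] := separating_diag_stable_delta diagD sepD stabD nzU.
exact: monomial_module_delta_full transG modU deltaU.
Qed.

End MonomialRepresentation.

Section MonomialSolvable.
Local Open Scope group_scope.
Variables (F : closedFieldType) (n : nat) (gT : finGroupType) (G : {group gT}).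
Variable rG : mx_representation F G n.
Hypothesis monoG : forall x, x \in G -> is_monomial (rG x).
Local Notation phi := (perm_part_morphism monoG).

Lemma monomial_solvable_irr_diag_nonscalar : prime n -> mx_faithful rG ->
  perm_part_transitive rG -> solvable G -> mx_irreducible rG -> diag_part_nonscalar rG.
Proof.
move=> n_pr ffulG transG solG irrG.
have [/forall_inP scalK | ] :=
  boolP [forall x in 'ker phi, is_scalar_mx (rG x)]; last first.
  rewrite negb_forall_in => /exists_inP[x /[1!mem_ker_perm_part] /andP[Gx diagx] nscal_x].
  by exists x; split=> //; split=> //; apply/negP.
exfalso.
have cKG : 'ker phi \subset 'Z(G).
  apply: subset_trans (faithful_rcenter_sub ffulG); apply/subsetP=> x Kx.
  by rewrite inE (dom_ker Kx) scalK.
have [M nsMQ oM] := solvable_prime_trans_normal n_pr (morphim_sol phi solG)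
  (perm_part_transitiveP monoG transG).
have sMQ := normal_sub nsMQ; pose N := (phi @*^-1 M)%G.
have sNG : N \subset G := morphpre_sub phi M.
have defG : phi @*^-1 (phi @* G) = G by rewrite morphimGK ?subsetIl.
have nsNG : N <| G by rewrite -defG morphpre_normal ?morphimS.
have imN : phi @* N = M by rewrite morphpreK.
have cNN : abelian N.
  apply: (@cyclic_factor_abelian _ ('ker_N phi)).
    apply/subsetP=> x /setIP[Nx Kx]; rewrite inE Nx; apply/centP=> y Ny.
    by have /setIP[_ /centP cx] := subsetP cKG x Kx; apply/cx/(subsetP sNG).
  by rewrite (isog_cyclic (first_isog_loc phi sNG)) /= imN prime_cyclic ?oM.
have [scalN | dvd_iGN] := mx_irr_prime_abelian_normal n_pr irrG nsNG cNN.
  have : N \subset 'ker phi.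
    apply/subsetP=> x Nx; rewrite mem_ker_perm_part (subsetP sNG) //=.
    exact: is_scalar_mx_is_diag (scalN x Nx).
  rewrite ker_trivg_morphim sNG imN /= => /trivgP M1.
  by move: oM; rewrite M1 cards1 => n1; rewrite -n1 in n_pr.
apply: negP (perm_prime_index_ndvd n_pr sMQ oM) _.
by rewrite -(index_morphpre M (subxx (phi @* G))) defG.
Qed.

End MonomialSolvable.

(* A finite subgroup of M(p,C) is given as the image of a faithful
   representation rG of a finite group G into GL(p,C). *)
Theorem theorem2p12 (p : nat) (gT : finGroupType) (G : {group gT})
    (rG : mx_representation Cfield G p) :
  prime p ->
  mx_faithful rG ->
  (forall x, x \in G -> is_monomial (rG x)) ->
  perm_part_transitive rG ->
  (diag_part_nonscalar rG -> mx_irreducible rG) /\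
  (solvable G -> mx_irreducible rG -> diag_part_nonscalar rG).
Proof.
move=> p_pr ffulG monoG transG; split.
  exact: monomial_diag_nonscalar_irr monoG p_pr transG.
exact: monomial_solvable_irr_diag_nonscalar monoG p_pr ffulG transG.
Qed.
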